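(* Let $\phi$ and $\psi$ be injective endomorphisms of $F_n$. Then there is a constant $M$ such that for all distinct $\alpha_1,\alpha_2\in \mathrm{Eq}(\widehat\phi,\widehat\psi)$, setting $\alpha=\alpha_1\wedge\alpha_2$ (a finite word), the reduced form of $(\alpha\phi)^{-1}(\alpha\psi)$ has length at most $M$.
   Context: $F_n$ is the free group on a finite basis $A$; elements are identified with reduced words over $\widetilde A=A\cup A^{-1}$, $|u|$ is the length of a reduced word; maps are written on the right. For reduced (finite or infinite) words $u,v$, $u\wedge v$ is their longest common prefix. $\widehat F_n$ is the completion of $F_n$ for the prefix metric $d(u,v)=2^{-|u\wedge v|}$ ($u\ne v$), i.e. the set of all finite and infinite reduced words over $\widetilde A$. An injective endomorphism $\phi$ of $F_n$ has a unique continuous extension $\widehat\phi$ to $\widehat F_n$. For maps $f,g$ with the same domain, $\mathrm{Eq}(f,g)=\{x\mid xf=xg\}$. *)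

(* free group F_A on a finite basis A, realised concretely
   as reduced words over A x bool (bool = true means the inverse letter). *)
From mathcomp Require Import all_boot.
Set Implicit Arguments. Unset Strict Implicit. Unset Printing Implicit Defensive.

Section FreeGroup.
Variable A : finType.

Definition letter := (A * bool)%type.
Definition linv (x : letter) : letter := (x.1, ~~ x.2).

Fixpoint reduced (w : seq letter) : bool :=
  match w with
  | x :: ((y :: _) as w') => (y != linv x) && reduced w'
  | _ => true
  end.

Definition push (x : letter) (s : seq letter) : seq letter :=
  if s is y :: s' then (if y == linv x then s' else x :: s) else [:: x].
Definition reduce (w : seq letter) : seq letter := foldr push [::] w.

Definition winv (w : seq letter) : seq letter := rev (map linv w).

Definition gmul (u v : seq letter) : seq letter := reduce (u ++ v).

(* endomorphism of F_A determined by the images f a of the basis letters;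
   (apply f w) is w f, the reduced form of the image *)
Definition apply (f : A -> seq letter) (w : seq letter) : seq letter :=
  reduce (flatten (map (fun x : letter => if x.2 then winv (f x.1) else f x.1) w)).

Definition injective_endo (f : A -> seq letter) : Prop :=
  forall u v, reduced u -> reduced v -> apply f u = apply f v -> u = v.

(* Completion \hat F_A: finite and infinite reduced words, encoded as
   maps nat -> option letter (None = past the end of a finite word). *)
Definition hword := nat -> option letter.

Definition is_hword (x : hword) : Prop :=
  (forall i, x i = None -> x i.+1 = None) /\
  (forall i a b, x i = Some a -> x i.+1 = Some b -> b != linv a).

Definition emb (w : seq letter) : hword := fun i => nth None (map Some w) i.

(* x and y have the same first k letters, i.e. d(x,y) <= 2^-k *)
Definition agree (k : nat) (x y : hword) : Prop := forall i, i < k -> x i = y i.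

Definition continuous_hat (F : hword -> hword) : Prop :=
  forall x, is_hword x -> forall k, exists m, forall y, is_hword y ->
    agree m x y -> agree k (F x) (F y).

Definition hat_ext (f : A -> seq letter) (F : hword -> hword) : Prop :=
  (forall x, is_hword x -> is_hword (F x)) /\
  (forall w, reduced w -> F (emb w) = emb (apply f w)) /\
  continuous_hat F.

Definition is_lcp (x y : hword) (p : seq letter) : Prop :=
  agree (size p) x (emb p) /\ agree (size p) y (emb p) /\ x (size p) <> y (size p).
End FreeGroup.

(* Put x = alpha phi and y = alpha psi.  By continuity of the extensions,
   alpha_1 and alpha_2 are approximated by finite reduced words alpha s_1 and
   alpha s_2, with s_1 and s_2 starting with different letters, whose phi- and
   psi-images agree on an arbitrarily long prefix.  An injective endomorphism is
   finite-to-one, which yields two bounded-distance facts in the Cayley tree: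
   bounded cancellation (x is, up to a bounded suffix, a prefix of both
   (alpha s_i) phi) and bounded divergence (the images (alpha s_1) phi and
   (alpha s_2) phi branch at most a bounded distance beyond x); the same holds
   for y and psi.  Since the phi- and psi-images agree far out, the two branch
   points coincide, so x and y have almost the same length and a long common
   prefix, and |x^-1 y| is bounded. *)

From mathcomp Require Import all_boot zify.
From Stdlib Require Import Classical.
Set Implicit Arguments. Unset Strict Implicit. Unset Printing Implicit Defensive.

Section FreeReduction.
Variable A : finType.
Implicit Types (x y : letter A) (s t w p r : seq (letter A)).

Lemma linvK x : linv (linv x) = x.
Proof. by case: x => a b; rewrite /linv /= negbK. Qed.

Lemma winvK w : winv (winv w) = w.
Proof. by rewrite /winv map_rev revK -map_comp (eq_map linvK) map_id. Qed.

Lemma winv_cat s t : winv (s ++ t) = winv t ++ winv s.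
Proof. by rewrite /winv map_cat rev_cat. Qed.

Lemma winv_cons x s : winv (x :: s) = winv s ++ [:: linv x].
Proof. by rewrite /winv /= rev_cons -cats1. Qed.

Lemma size_winv s : size (winv s) = size s.
Proof. by rewrite /winv size_rev size_map. Qed.

Lemma reduced_cons x s :
  reduced (x :: s) = (if s is y :: _ then y != linv x else true) && reduced s.
Proof. by case: s. Qed.

Lemma reduced_behead x s : reduced (x :: s) -> reduced s.
Proof. by rewrite reduced_cons => /andP[]. Qed.

Lemma reduced_catl s t : reduced (s ++ t) -> reduced s.
Proof.
elim: s => [|x s IH] //; rewrite cat_cons reduced_cons => /andP[Hx Hst].
by rewrite reduced_cons (IH Hst) andbT; case: s Hx {IH Hst}.
Qed.

Lemma reduced_catr s t : reduced (s ++ t) -> reduced t.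
Proof. by elim: s => [|x s IH] // /reduced_behead. Qed.

Lemma reduced_take k s : reduced s -> reduced (take k s).
Proof. by rewrite -{1}(cat_take_drop k s) => /reduced_catl. Qed.

Lemma reduced_drop k s : reduced s -> reduced (drop k s).
Proof. by rewrite -{1}(cat_take_drop k s) => /reduced_catr. Qed.

Lemma reduced_push x s : reduced s -> reduced (push x s).
Proof.
case: s => [|y s] // Hs; rewrite /push; case: eqP => [_|/eqP Hy].
  exact: reduced_behead Hs.
by rewrite reduced_cons Hy Hs.
Qed.

Lemma reduced_reduce w : reduced (reduce w).
Proof. by elim: w => //= x w IH; apply: reduced_push. Qed.

Lemma reduce_id w : reduced w -> reduce w = w.
Proof.
elim: w => // x w IH Hw /=; rewrite IH; last exact: reduced_behead Hw.
by move: Hw; rewrite reduced_cons; case: w {IH} => //= y w /andP[/negbTE ->].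
Qed.

Lemma pushK x r : reduced r -> push (linv x) (push x r) = r.
Proof.
case: r => [|y r] /=; first by rewrite linvK eqxx.
case: eqP => [->|/eqP Hy] Hr; last by rewrite /= linvK eqxx.
by case: r Hr => [|z r] //= /andP[Hz _]; rewrite linvK in Hz *; rewrite (negbTE Hz).
Qed.

Lemma push_linvK x r : reduced r -> push x (push (linv x) r) = r.
Proof. by move=> Hr; rewrite -{1}(linvK x) pushK. Qed.

Lemma reduce_cat s t : reduce (s ++ t) = foldr (@push A) (reduce t) s.
Proof. by rewrite /reduce foldr_cat. Qed.

Lemma reduce_winvl p w : reduce (winv p ++ p ++ w) = reduce w.
Proof.
elim: p => //= x p IH.
by rewrite winv_cons -catA reduce_cat /= pushK ?reduced_reduce // -reduce_cat.
Qed.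

Lemma reduce_winvr p w : reduce (p ++ winv p ++ w) = reduce w.
Proof. by rewrite -{1}(winvK p) reduce_winvl. Qed.

Lemma reduce_mid_winv s p w : reduce (s ++ p ++ winv p ++ w) = reduce (s ++ w).
Proof. by rewrite reduce_cat reduce_winvr -reduce_cat. Qed.

Lemma reduce_catr s t : reduce (s ++ reduce t) = reduce (s ++ t).
Proof. by rewrite !reduce_cat (reduce_id (reduced_reduce t)). Qed.

Lemma reduce_push_cat x r t : reduce (push x r ++ t) = push x (reduce (r ++ t)).
Proof.
case: r => [|y r] //=; case: eqP => [->|_] //=.
by rewrite push_linvK // reduced_reduce.
Qed.

Lemma reduce_catl s t : reduce (reduce s ++ t) = reduce (s ++ t).
Proof. by elim: s => //= x s IH; rewrite reduce_push_cat IH. Qed.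

Definition head_diff s t :=
  match s, t with x :: _, y :: _ => x != y | _, _ => true end.

Lemma head_diff_take i j s t :
  0 < i -> 0 < j -> head_diff s t -> head_diff (take i s) (take j t).
Proof. by case: i j s t => [|i] [|j] [|x s] [|y t]. Qed.

Lemma reduce_winv_cat s t : reduced s -> reduced t -> head_diff s t ->
  reduce (winv s ++ t) = winv s ++ t.
Proof.
move=> Hs Ht; rewrite reduce_cat (reduce_id Ht).
elim: s t Hs Ht => [|x s IH] t Hs Ht Hd //.
rewrite winv_cons foldr_cat /=.
have -> : push (linv x) t = linv x :: t.
  by case: t Ht Hd => //= y t _; rewrite linvK eq_sym => /negbTE ->.
rewrite IH -?catA //; first exact: reduced_behead Hs.
  by rewrite reduced_cons Ht andbT; case: t Hd {Ht} => //= y t; rewrite linvK eq_sym.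
by move: Hs; rewrite reduced_cons; case: s {IH Hd} => //= y s /andP[].
Qed.

Lemma reduced_winv_cat s t : reduced s -> reduced t -> head_diff s t ->
  reduced (winv s ++ t).
Proof. by move=> Hs Ht Hd; rewrite -reduce_winv_cat // reduced_reduce. Qed.

Lemma size_reduce s : size (reduce s) <= size s.
Proof.
elim: s => //= x s IH; case: (reduce s) IH => [|y r] //= Hr.
by case: eqP => _ /=; lia.
Qed.

End FreeReduction.

Section CommonPrefix.
Variable A : finType.
Implicit Types (s t u : seq (letter A)).

Fixpoint lcpn s t :=
  match s, t with
  | x :: s', y :: t' => if x == y then (lcpn s' t').+1 else 0
  | _, _ => 0
  end.

Lemma lcpnC s t : lcpn s t = lcpn t s.
Proof.
elim: s t => [|x s IH] [|y t] //=.
by case: eqP => [->|/eqP Hxy]; rewrite ?eqxx ?IH // eq_sym (negbTE Hxy).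
Qed.

Lemma lcpn_sizel s t : lcpn s t <= size s.
Proof. by elim: s t => [|x s IH] [|y t] //=; case: eqP => //= _; apply: IH. Qed.

Lemma lcpn_sizer s t : lcpn s t <= size t.
Proof. by rewrite lcpnC lcpn_sizel. Qed.

Lemma lcpnn s : lcpn s s = size s.
Proof. by elim: s => //= x s ->; rewrite eqxx. Qed.

Lemma take_lcpn s t : take (lcpn s t) s = take (lcpn s t) t.
Proof. by elim: s t => [|x s IH] [|y t] //=; case: eqP => //= ->; rewrite IH. Qed.

Lemma head_diff_drop_lcpn s t : head_diff (drop (lcpn s t) s) (drop (lcpn s t) t).
Proof. by elim: s t => [|x s IH] [|y t] //=; case: eqP => //= /eqP. Qed.

Lemma lcpn_ultra s t u : minn (lcpn s t) (lcpn t u) <= lcpn s u.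
Proof.
elim: s t u => [|x s IH] [|y t] [|z u] //=; rewrite ?minn0 ?min0n //.
case: (x =P y) => [<-|_]; last by rewrite min0n.
by case: (x =P z) => _; [rewrite minnSS ltnS IH | rewrite minn0].
Qed.

Lemma lcpn_take N s t : lcpn (take N s) (take N t) = minn N (lcpn s t).
Proof.
elim: N s t => [|N IH] [|x s] [|y t] //=; rewrite ?min0n ?minn0 //.
by case: eqP => // _; rewrite IH minnSS.
Qed.

Definition dist s t := size (reduce (winv s ++ t)).

Lemma dist_lcpn s t : reduced s -> reduced t ->
  dist s t = size s + size t - 2 * lcpn s t.
Proof.
move=> Hs Ht; have := lcpn_sizel s t; have := lcpn_sizer s t.
have := take_lcpn s t; have := head_diff_drop_lcpn s t.
set k := lcpn s t => Hd Hk Hkt Hks.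
rewrite /dist -{1}(cat_take_drop k s) -{1}(cat_take_drop k t) Hk.
rewrite winv_cat -catA reduce_cat reduce_winvl -reduce_cat.
rewrite reduce_winv_cat ?reduced_drop //.
by rewrite size_cat size_winv !size_drop; lia.
Qed.

End CommonPrefix.

Section Endomorphism.
Variables (A : finType) (f : A -> seq (letter A)).
Implicit Types (x : letter A) (s t p : seq (letter A)).

Definition img s :=
  flatten (map (fun x : letter A => if x.2 then winv (f x.1) else f x.1) s).

Lemma applyE s : apply f s = reduce (img s).
Proof. by []. Qed.

Lemma img_cat s t : img (s ++ t) = img s ++ img t.
Proof. by rewrite /img map_cat flatten_cat. Qed.

Lemma img_linv x : img [:: linv x] = winv (img [:: x]).
Proof. by case: x => a [] /=; rewrite /img /= !cats0 // winvK. Qed.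

Lemma apply_reduced s : reduced (apply f s).
Proof. exact: reduced_reduce. Qed.

Lemma apply_cat s t : apply f (s ++ t) = reduce (apply f s ++ apply f t).
Proof. by rewrite !applyE img_cat reduce_catr reduce_catl. Qed.

Lemma apply_push x r : apply f (push x r) = apply f (x :: r).
Proof.
case: r => [|y r] //=; case: eqP => [->|_] //.
by rewrite !applyE -[linv x :: r]cat1s -cat1s !img_cat img_linv reduce_winvr.
Qed.

Lemma apply_reduce s : apply f (reduce s) = apply f s.
Proof. by elim: s => //= x s IH; rewrite apply_push -cat1s apply_cat IH -apply_cat. Qed.

Definition max_img_size := \max_(a : A) size (f a).

Lemma size_apply s : size (apply f s) <= max_img_size * size s.
Proof.
rewrite applyE; apply: leq_trans (size_reduce _) _.
elim: s => [|x s IH] //=; rewrite /img /= size_cat -/(img s) mulnS leq_add //.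
have Hx : size (f x.1) <= max_img_size := @leq_bigmax _ (fun a => size (f a)) x.1.
by case: (x.2); rewrite ?size_winv.
Qed.

Lemma dist_apply_cat s t : dist (apply f s) (apply f (s ++ t)) = size (apply f t).
Proof. by rewrite /dist apply_cat reduce_catr reduce_winvl reduce_id ?apply_reduced. Qed.

Lemma dist_apply_take p s i j : i <= j ->
  dist (apply f (p ++ take i s)) (apply f (p ++ take j s)) =
  size (apply f (drop i (take j s))).
Proof.
move=> Hij; rewrite -[in p ++ take j s](cat_take_drop i (take j s)) take_takel //.
by rewrite catA dist_apply_cat.
Qed.

Lemma dist_apply_take_step p s k :
  dist (apply f (p ++ take k s)) (apply f (p ++ take k.+1 s)) <= max_img_size.
Proof.
rewrite dist_apply_take //; apply: leq_trans (size_apply _) _.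
by rewrite -[leqRHS]muln1 leq_mul // size_drop size_take_min; lia.
Qed.

Lemma dist_apply_branch p s t :
  dist (apply f (p ++ s)) (apply f (p ++ t)) = size (apply f (winv s ++ t)).
Proof.
rewrite -(apply_reduce (p ++ t)) -(reduce_mid_winv p s t) apply_reduce catA.
exact: dist_apply_cat.
Qed.

End Endomorphism.

Section FiniteToOne.
Variables (A : finType) (f : A -> seq (letter A)).
Hypothesis f_inj : injective_endo f.

Fixpoint words_upto (n : nat) : seq (seq (letter A)) :=
  if n is n'.+1 then [::] :: [seq x :: w | x <- enum {: letter A}, w <- words_upto n']
  else [:: [::]].

Lemma words_uptoP n w : size w <= n -> w \in words_upto n.
Proof.
elim: n w => [|n IH] [|x w] //= Hw; rewrite inE; apply/orP; right.
by apply: (allpairs_f (fun x w => x :: w)); [rewrite mem_enum | apply: IH].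
Qed.

Lemma preimage_size_bound_in (T : seq (seq (letter A))) :
  exists B, forall s, reduced s -> apply f s \in T -> size s <= B.
Proof.
elim: T => [|t T [B IH]]; first by exists 0.
have [[s0 [Hs0 Es0]]|Nt] := classic (exists s0, reduced s0 /\ apply f s0 = t).
  exists (maxn B (size s0)) => s Hs; rewrite inE => /orP[/eqP Et|HT].
    by rewrite (f_inj Hs Hs0 (etrans Et (esym Es0))) leq_maxr.
  exact: leq_trans (IH s Hs HT) (leq_maxl _ _).
exists B => s Hs; rewrite inE => /orP[/eqP Et|]; last exact: IH.
by case: Nt; exists s.
Qed.

Lemma preimage_size_bound n :
  exists B, forall s, reduced s -> size (apply f s) <= n -> size s <= B.
Proof.
have [B HB] := preimage_size_bound_in (words_upto n).
by exists B => s Hs /words_uptoP; apply: HB.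
Qed.

End FiniteToOne.

Section PathInTree.
Variables (A : finType) (L : nat) (h : nat -> seq (letter A)).
Hypotheses (h_reduced : forall k, reduced (h k))
           (h_step : forall k, dist (h k) (h k.+1) <= L).

Lemma path_enter z m i j : i <= j -> lcpn (h i) z < m -> m <= lcpn (h j) z ->
  exists k, [/\ i < k <= j, m <= lcpn (h k) z & size (h k) <= m + L].
Proof.
move=> Hij Hi Hj.
have Hex : exists n, m <= lcpn (h (i + n)) z by exists (j - i); rewrite subnKC.
have [[|n] Hn Hmin] := ex_minnP Hex; first by rewrite addn0 leqNgt Hi in Hn.
have Hjn : n.+1 <= j - i by apply: Hmin; rewrite subnKC.
have Hn' : lcpn (h (i + n)) z < m by rewrite ltnNge; apply/negP => /Hmin; lia.
exists (i + n.+1); split => //; first lia.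
have := h_step (i + n); rewrite -addnS dist_lcpn //.
have := lcpn_ultra (h (i + n)) (h (i + n.+1)) z.
have := lcpn_sizel (h (i + n)) (h (i + n.+1)); lia.
Qed.

(* The first h k with lcpn (h k) z <= m lies within L of the point at depth m on
   the geodesic to z, hence within 2L of every u of length <= m + L through it. *)
Lemma path_leave z m i j : i <= j -> m < lcpn (h i) z -> lcpn (h j) z <= m ->
  exists k, i < k <= j /\ forall u, reduced u -> m <= lcpn u z -> size u <= m + L ->
    dist u (h k) <= L + L.
Proof.
move=> Hij Hi Hj.
have Hex : exists n, lcpn (h (i + n)) z <= m by exists (j - i); rewrite subnKC.
have [[|n] Hn Hmin] := ex_minnP Hex; first by rewrite addn0 leqNgt Hi in Hn.
have Hjn : n.+1 <= j - i by apply: Hmin; rewrite subnKC.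
have Hn' : m < lcpn (h (i + n)) z by rewrite ltnNge; apply/negP => /Hmin; lia.
exists (i + n.+1); split; first lia.
move=> u Hu Huz HuL; rewrite addnS in Hn *.
have := h_step (i + n); rewrite !dist_lcpn //.
have := lcpn_ultra (h (i + n).+1) (h (i + n)) z.
have := lcpn_ultra u z (h (i + n).+1); have := lcpn_sizel (h (i + n)) z.
rewrite (lcpnC (h (i + n).+1)) (lcpnC z); lia.
Qed.

End PathInTree.

Section BoundedCancellation.
Variables (A : finType) (f : A -> seq (letter A)).
Hypothesis f_inj : injective_endo f.
Let L := max_img_size f.

Lemma bounded_cancellation : exists C, forall w i, reduced w ->
  size (apply f (take i w)) <= lcpn (apply f (take i w)) (apply f w) + C.
Proof.
(* Along the path k |-> (take k w) f, take the points i0 <= s and k > s where it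
   enters and leaves the branch point of (take s w) f and w f.  These images are
   within 2L of each other, so k - i0, hence the distance from the branch point
   to (take s w) f, is bounded. *)
have [B HB] := preimage_size_bound f_inj (L + L).
exists (L + L * B) => w s Hw; set n := size w.
have [Hns|Hsn] := leqP n s; first by rewrite take_oversize // lcpnn leq_addr.
pose h k := apply f (take k w).
have h_reduced k : reduced (h k) by apply: apply_reduced.
have h_step k : dist (h k) (h k.+1) <= L := dist_apply_take_step f [::] w k.
have -> : apply f w = h n by rewrite /h take_size.
rewrite -/(h s).
set m := lcpn (h s) (h n).
have [Hsm|Hms] := leqP (size (h s)) m; first lia.
have Hss : lcpn (h s) (h s) = size (h s) by apply: lcpnn.
have [i0 [Hi0 Hi0m Hi0L]] :
    exists i0, [/\ i0 <= s, m <= lcpn (h i0) (h s) & size (h i0) <= m + L].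
  have [->|Hm] := posnP m; first by exists 0; rewrite /h take0.
  have [k [/andP[_ Hk] Hkm HkL]] := @path_enter _ _ _ h_reduced h_step (h s) m 0 s
    (leq0n s) ltac:(by rewrite /h take0) ltac:(lia).
  by exists k.
have [k [/andP[Hsk Hkn] Hk]] := @path_leave _ _ _ h_reduced h_step (h s) m s n
  (ltnW Hsn) ltac:(lia) ltac:(by rewrite lcpnC).
have Hi0k : k - i0 <= B.
  have := Hk _ (h_reduced i0) Hi0m Hi0L; rewrite (dist_apply_take f [::] w); last lia.
  move/(HB _ (reduced_drop _ (reduced_take _ Hw))).
  by rewrite size_drop size_takel //; lia.
have Hi0s : dist (h i0) (h s) <= L * B.
  rewrite (dist_apply_take f [::] w) //; apply: leq_trans (size_apply _ _) _.
  by rewrite leq_mul // size_drop size_takel //; lia.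
move: Hi0s; rewrite dist_lcpn //; have := lcpn_sizel (h i0) (h s); lia.
Qed.

Lemma branch_lcpn_bound : exists C, forall p s t,
  reduced (p ++ s) -> reduced (p ++ t) -> head_diff s t ->
  lcpn (apply f (p ++ s)) (apply f (p ++ t)) <= size (apply f p) + C.
Proof.
(* The paths i |-> (p ++ take i s) f and j |-> (p ++ take j t) f both reach the
   branch point of P1 and P2; their entry points are within 2L, which bounds i
   because winv (take i s) ++ take j t is reduced. *)
have [B HB] := preimage_size_bound f_inj (L + L).
exists (L * B) => p s t Hs Ht Hst.
set P1 := apply f (p ++ s); set P2 := apply f (p ++ t); set m := lcpn P1 P2.
have [Hm|Hm] := leqP m (size (apply f p)); first lia.
have enter r : m <= lcpn (apply f (p ++ r)) P1 -> exists i,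
    [/\ 0 < i <= size r, m <= lcpn (apply f (p ++ take i r)) P1
      & size (apply f (p ++ take i r)) <= m + L].
  move=> Hr; apply: (path_enter (h := fun i => apply f (p ++ take i r))) => //.
  - by move=> k; apply: apply_reduced.
  - by move=> k; apply: dist_apply_take_step.
  - by rewrite take0 cats0; apply: leq_ltn_trans (lcpn_sizel _ _) Hm.
  - by rewrite take_size.
have [i [/andP[Hi0 His] Him HiL]] := enter s ltac:(by rewrite lcpnn lcpn_sizel).
have [j [/andP[Hj0 Hjt] Hjm HjL]] := enter t ltac:(by rewrite lcpnC).
set x := apply f (p ++ take i s) in Him HiL.
set y := apply f (p ++ take j t) in Hjm HjL.
have Hxy : dist x y <= L + L.
  rewrite dist_lcpn ?apply_reduced //.
  have := lcpn_ultra x P1 y; rewrite (lcpnC P1 y); lia.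
have Rs : reduced (take i s) by exact: reduced_take _ (reduced_catr Hs).
have Rt : reduced (take j t) by exact: reduced_take _ (reduced_catr Ht).
move: Hxy; rewrite /x /y dist_apply_branch.
move/(HB _ (reduced_winv_cat Rs Rt (head_diff_take Hi0 Hj0 Hst))).
rewrite size_cat size_winv !size_takel // => HiB.
have Hpx : dist (apply f p) x <= L * B.
  rewrite /x dist_apply_cat; apply: leq_trans (size_apply _ _) _.
  by rewrite leq_mul // size_takel //; lia.
move: Hpx; rewrite dist_lcpn ?apply_reduced //.
have := lcpn_sizel (apply f p) x; have := lcpn_sizel x P1; lia.
Qed.

End BoundedCancellation.

Section Completion.
Variable A : finType.
Implicit Types (s t : seq (letter A)) (x : hword A).

Fixpoint hprefix (m : nat) x : seq (letter A) :=
  if m is m'.+1 then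
    if x 0 is Some a then a :: hprefix m' (fun i => x i.+1) else [::]
  else [::].

Lemma hword_behead x : is_hword x -> is_hword (fun i => x i.+1).
Proof. by case=> H1 H2; split => [i|i a b]; [apply: H1 | apply: H2]. Qed.

Lemma hword_nil x : is_hword x -> x 0 = None -> forall i, x i = None.
Proof. by case=> H1 _ H0; elim => // i; apply: H1. Qed.

Lemma agree_hprefix m x : is_hword x -> agree m (emb (hprefix m x)) x.
Proof.
elim: m x => [|m IH] x Hx i Hi //=.
case Ex: (x 0) => [a|]; last by rewrite /emb nth_nil (hword_nil Hx Ex).
by case: i Hi => [|i] Hi; [rewrite Ex | apply: (IH _ (hword_behead Hx))].
Qed.

Lemma reduced_hprefix m x : is_hword x -> reduced (hprefix m x).
Proof.
elim: m x => [|m IH] x Hx //=.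
case Ex: (x 0) => [a|] //.
rewrite reduced_cons IH ?andbT; last exact: hword_behead.
case: m {IH} => [|m] //=; case Ex1: (x 1) => [b|] //.
exact: Hx.2 0 a b Ex Ex1.
Qed.

Lemma emb_hword s : reduced s -> is_hword (emb s).
Proof.
move=> Hs; split; rewrite /emb.
  by elim: s {Hs} => [|a s IH] [|i] //=; apply: IH.
elim: s Hs => [|a s IH] Hs [|i] b c //=.
  by case: s Hs {IH} => [|b' s] //= /andP[Hb _] [<-] [<-].
exact: IH (reduced_behead Hs) i b c.
Qed.

Lemma agree_take N s t : agree N (emb s) (emb t) -> take N s = take N t.
Proof.
elim: N s t => [|N IH] [|a s] [|b t] H //=; have := H 0 (ltn0Sn _); rewrite /emb //=.
by case=> ->; congr (_ :: _); apply: IH => i Hi; apply: (H i.+1).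
Qed.

Lemma emb_drop k s i : emb (drop k s) i = emb s (k + i).
Proof. by rewrite /emb map_drop nth_drop. Qed.

Lemma split_at_lcp a1 a2 p b1 b2 : is_lcp a1 a2 p ->
  agree (size p).+1 (emb b1) a1 -> agree (size p).+1 (emb b2) a2 ->
  exists s1 s2, [/\ b1 = p ++ s1, b2 = p ++ s2 & head_diff s1 s2].
Proof.
move=> [Hp1 [Hp2 Hdiff]] Hb1 Hb2.
have split_b b a : agree (size p) a (emb p) -> agree (size p).+1 (emb b) a ->
    b = p ++ drop (size p) b.
  move=> Ha Hb; rewrite -{1}(cat_take_drop (size p) b); congr (_ ++ _).
  by rewrite -[RHS]take_size; apply: agree_take => i Hi; rewrite Hb ?Ha // ltnW.
exists (drop (size p) b1), (drop (size p) b2); split.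
- exact: split_b _ _ Hp1 Hb1.
- exact: split_b _ _ Hp2 Hb2.
have := emb_drop (size p) b1 0; have := emb_drop (size p) b2 0.
  rewrite !addn0 Hb1 // Hb2 //.
  case: (drop _ b1) => [|c s1]; case: (drop _ b2) => [|d s2] //= E2 E1.
  by apply/eqP => Ecd; apply: Hdiff; rewrite -E1 -E2 /emb /= Ecd.
Qed.

End Completion.

Lemma equalizer_approx (A : finType) (phi psi : A -> seq (letter A))
    (Phi Psi : hword A -> hword A) :
  hat_ext phi Phi -> hat_ext psi Psi ->
  forall a, is_hword a -> (forall i, Phi a i = Psi a i) -> forall K N,
  exists b, [/\ reduced b, agree K (emb b) a & take N (apply phi b) = take N (apply psi b)].
Proof.
move=> [_ [Phi_emb Phi_cont]] [_ [Psi_emb Psi_cont]] a Ha Ea K N.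
have [m1 Hm1] := Phi_cont a Ha N; have [m2 Hm2] := Psi_cont a Ha N.
pose b := hprefix (m1 + m2 + K) a.
have Rb : reduced b := reduced_hprefix _ Ha.
have Hb : agree (m1 + m2 + K) (emb b) a := agree_hprefix Ha.
have close m : m <= m1 + m2 + K -> agree m a (emb b).
  by move=> Hm i Hi; rewrite Hb //; apply: leq_trans Hm.
have A1 : agree N (Phi a) (Phi (emb b)) := Hm1 _ (emb_hword Rb) (close m1 ltac:(lia)).
have A2 : agree N (Psi a) (Psi (emb b)) := Hm2 _ (emb_hword Rb) (close m2 ltac:(lia)).
exists b; split => // [i Hi|]; first by rewrite Hb //; lia.
apply: agree_take => i Hi.
by rewrite -Phi_emb // -Psi_emb // -A1 // -A2 // Ea.
Qed.

Lemma lcpn_of_agreeing_branches (A : finType) (x y P1 P2 Q1 Q2 : seq (letter A)) C N :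
  take N P1 = take N Q1 -> take N P2 = take N Q2 -> size x + size y + C < N ->
  size x <= lcpn x P1 + C -> size x <= lcpn x P2 + C ->
  size y <= lcpn y Q1 + C -> size y <= lcpn y Q2 + C ->
  lcpn P1 P2 <= size x + C -> lcpn Q1 Q2 <= size y + C ->
  size x + size y <= 2 * lcpn x y + 4 * C.
Proof.
move=> E1 E2 HN.
have EP : minn N (lcpn P1 P2) = minn N (lcpn Q1 Q2) by rewrite -!lcpn_take E1 E2.
have EPQ : minn N (lcpn P1 Q1) = minn N (size P1).
  by rewrite -lcpn_take -E1 lcpnn size_take_min.
have := lcpn_ultra P1 x P2; have := lcpn_ultra Q1 y Q2.
have := lcpn_ultra x P1 Q1; have := lcpn_ultra x Q1 y; have := lcpn_sizer x P1.
rewrite (lcpnC P1 x) (lcpnC Q1 y); lia.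
Qed.

Theorem lemma2p2 (A : finType) (phi psi : A -> seq (letter A))
  (Hphi : injective_endo phi) (Hpsi : injective_endo psi)
  (Phi Psi : hword A -> hword A)
  (HPhi : hat_ext phi Phi) (HPsi : hat_ext psi Psi) :
  exists M : nat,
    forall (a1 a2 : hword A), is_hword a1 -> is_hword a2 ->
      (forall i, Phi a1 i = Psi a1 i) -> (forall i, Phi a2 i = Psi a2 i) ->
      a1 <> a2 ->
      forall alpha : seq (letter A), is_lcp a1 a2 alpha ->
        size (gmul (winv (apply phi alpha)) (apply psi alpha)) <= M.
Proof.
have [C1 H1] := bounded_cancellation Hphi; have [C2 H2] := bounded_cancellation Hpsi.
have [C3 H3] := branch_lcpn_bound Hphi; have [C4 H4] := branch_lcpn_bound Hpsi.
exists (4 * (C1 + C2 + C3 + C4)).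
(* a1 <> a2 is already part of is_lcp. *)
move=> a1 a2 Ha1 Ha2 E1 E2 _ al Hal.
set x := apply phi al; set y := apply psi al.
set N := size x + size y + (C1 + C2 + C3 + C4) + 1.
have [b1 [Rb1 Hb1 T1]] := equalizer_approx HPhi HPsi Ha1 E1 (size al).+1 N.
have [b2 [Rb2 Hb2 T2]] := equalizer_approx HPhi HPsi Ha2 E2 (size al).+1 N.
have [s1 [s2 [Eb1 Eb2 Hs]]] := split_at_lcp Hal Hb1 Hb2.
rewrite {}Eb1 in Rb1 T1; rewrite {}Eb2 in Rb2 T2.
have := H1 _ (size al) Rb1; have := H1 _ (size al) Rb2.
have := H2 _ (size al) Rb1; have := H2 _ (size al) Rb2; rewrite !take_size_cat // -/x -/y.
have := H3 _ _ _ Rb1 Rb2 Hs; have := H4 _ _ _ Rb1 Rb2 Hs; rewrite -/x -/y.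
have := lcpn_of_agreeing_branches (x := x) (y := y) (C := C1 + C2 + C3 + C4) T1 T2.
rewrite /gmul -/(dist x y) dist_lcpn ?apply_reduced //; lia.
Qed.
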